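(* Let $\rho_1, \rho_2$ be $N \times N$ density matrices (positive semidefinite complex matrices with unit trace), let $P_+$ be the orthogonal projector onto the span of the eigenvectors of $\rho_1-\rho_2$ with positive eigenvalues, and $P_-$ the orthogonal projector onto the span of the eigenvectors of $\rho_1-\rho_2$ with negative eigenvalues. Let $I$ denote the $N\times N$ identity matrix. Then $$\mathrm{tr}\,P_+(I-\rho_1)\rho_1 \ge \mathrm{tr}\,P_+(I-\rho_1)\rho_2,$$ $$\mathrm{tr}\,P_-\rho_1(I-\rho_1) \ge \mathrm{tr}\,P_-\rho_1(I-\rho_2),$$ $$\mathrm{tr}\,P_+(I-\rho_2)\rho_2 \ge \mathrm{tr}\,P_+(I-\rho_1)\rho_2,$$ $$\mathrm{tr}\,P_-\rho_2(I-\rho_2) \ge \mathrm{tr}\,P_-\rho_1(I-\rho_2).$$ *)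

From HB Require Import structures.
From mathcomp Require Import all_boot all_order all_algebra.
Set Implicit Arguments. Unset Strict Implicit. Unset Printing Implicit Defensive.
Import Order.TTheory GRing.Theory Num.Theory.
Local Open Scope ring_scope.
Local Open Scope sesquilinear_scope.

(* Complex scalars: an arbitrary numClosedFieldType C (e.g. complex numbers).
   Vectors are column vectors 'cV[C]_N; A ^t* is the conjugate transpose.
   On C, [0 <= z] means z is real and nonnegative. *)

Definition hermitianmx (C : numClosedFieldType) (N : nat) (A : 'M[C]_N) : Prop :=
  A ^t* = A.

Definition psdmx (C : numClosedFieldType) (N : nat) (A : 'M[C]_N) : Prop :=
  hermitianmx A /\ forall v : 'cV[C]_N, 0 <= ((v ^t*) *m A *m v) 0 0.

Definition density_matrix (C : numClosedFieldType) (N : nat) (rho : 'M[C]_N) : Prop :=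
  psdmx rho /\ \tr rho = 1.

(* v lies in the span of the eigenvectors of D whose eigenvalues satisfy [sel]
   (scalar multiples of eigenvectors being eigenvectors, the span is the set of
   finite sums of such eigenvectors) *)
Definition in_eigspan (C : numClosedFieldType) (N : nat) (sel : C -> bool)
    (D : 'M[C]_N) (v : 'cV[C]_N) : Prop :=
  exists (k : nat) (vs : 'I_k -> 'cV[C]_N) (ls : 'I_k -> C),
    (forall i, sel (ls i) /\ D *m vs i = ls i *: vs i) /\ v = \sum_(i < k) vs i.

(* P is the orthogonal projector onto the subspace S:
   P is idempotent, self-adjoint, and its range (= its fixed vectors) is S *)
Definition orth_projector_onto (C : numClosedFieldType) (N : nat)
    (P : 'M[C]_N) (S : 'cV[C]_N -> Prop) : Prop :=
  P *m P = P /\ P ^t* = P /\ (forall v : 'cV[C]_N, P *m v = v <-> S v).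

From Pilot Require Import Defs.
From HB Require Import structures.
From mathcomp Require Import all_boot all_order all_algebra.
Import Order.TTheory GRing.Theory Num.Theory.
Local Open Scope ring_scope.
Local Open Scope sesquilinear_scope.

Set Implicit Arguments.
Unset Strict Implicit.

(** Each of the four differences is the trace of a product of two positive
    semidefinite matrices, hence nonnegative.  Writing [D = rho1 - rho2], the
    matrices [D P+] and [-D P-] are positive semidefinite, because the
    projectors commute with [D] and [D] is positive (resp. negative) on their
    ranges; and [1 - rho] is positive semidefinite for a density matrix, whose
    eigenvalues lie in [0, 1].  The commutation is needed for the last two
    differences, e.g. it turns [tr P+ (rho1 - rho2) rho2] into [tr (D P+) rho2]. *)

Section ConjugateTranspose.
Variable C : numClosedFieldType.

Lemma adjmxM m n p (A : 'M[C]_(m, n)) (B : 'M[C]_(n, p)) :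
  (A *m B)^t* = B^t* *m A^t*.
Proof. by rewrite trmx_mul map_mxM. Qed.

Lemma adjmxZ m n a (A : 'M[C]_(m, n)) : (a *: A)^t* = a^* *: A^t*.
Proof. by rewrite linearZ /= map_mxZ. Qed.

Lemma adjmxB m n (A B : 'M[C]_(m, n)) : (A - B)^t* = A^t* - B^t*.
Proof. by rewrite linearB map_mxB. Qed.

Lemma adjmx_sum n k (x : 'I_k -> 'cV[C]_n) : (\sum_i x i)^t* = \sum_i (x i)^t*.
Proof. by rewrite !raddf_sum. Qed.

Lemma cVnorm_ge0 n (x : 'cV[C]_n) : 0 <= (x^t* *m x) 0 0.
Proof.
rewrite mxE; apply: sumr_ge0 => k _; rewrite !mxE mulrC; exact: mul_conjC_ge0.
Qed.

Lemma mulmx_cV_inj n (X Y : 'M[C]_n) : (forall v : 'cV_n, X *m v = Y *m v) -> X = Y.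
Proof.
move=> XY; apply/matrixP => i j.
have := congr1 (fun v : 'cV[C]_n => v i 0) (XY (delta_mx j 0)).
by rewrite /= -!colE !mxE.
Qed.

End ConjugateTranspose.

Section PositiveSemidefinite.
Variable C : numClosedFieldType.

Lemma hermitian_spectralE n (A : 'M[C]_n) : A^t* = A ->
  A = (spectralmx A)^t* *m diag_mx (spectral_diag A) *m spectralmx A.
Proof.
move=> hA; rewrite -invmx_unitary ?spectral_unitarymx //.
apply/orthomx_spectralP/hermitian_normalmx/is_hermitianmxP.
by rewrite expr0 scale1r hA.
Qed.

Lemma spectral_adjmxK n (A : 'M[C]_n) : (spectralmx A)^t* *m spectralmx A = 1%:M.
Proof.
by rewrite -invmx_unitary ?spectral_unitarymx // mulVmx ?spectral_unit.
Qed.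

Lemma psdmx_congr_diag_ge0 m n (A : 'M[C]_n) (X : 'M[C]_(m, n)) k :
  psdmx A -> 0 <= (X *m A *m X^t*) k k.
Proof.
move=> [_ Aform]; have := Aform ((row k X)^t*); rewrite trmxCK.
congr (_ <= _); rewrite !mxE; apply: eq_bigr => j _; rewrite !mxE.
by congr (_ * _); apply: eq_bigr => i _; rewrite !mxE.
Qed.

Lemma psdmx_spectral_diag_ge0 n (A : 'M[C]_n) k :
  psdmx A -> 0 <= spectral_diag A 0 k.
Proof.
move=> hA; have := psdmx_congr_diag_ge0 (spectralmx A) k hA.
rewrite {2}(hermitian_spectralE hA.1) !mulmxA.
rewrite (unitarymxP (spectral_unitarymx A)) mul1mx mulmxtVK ?spectral_unitarymx //.
by rewrite mxE eqxx mulr1n.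
Qed.

Lemma psdmx_conj_diag n (U : 'M[C]_n) (e : 'rV[C]_n) :
  (forall k, 0 <= e 0 k) -> psdmx (U^t* *m diag_mx e *m U).
Proof.
move=> e_ge0; split.
  rewrite /Defs.hermitianmx !adjmxM trmxCK tr_diag_mx map_diag_mx mulmxA.
  congr (_ *m diag_mx _ *m _); apply/rowP => k; rewrite !mxE.
  exact/geC0_conj/e_ge0.
move=> v; rewrite -!mulmxA mulmxA -adjmxM mul_diag_mx.
set w := U *m v; rewrite !mxE; apply: sumr_ge0 => k _; rewrite !mxE mulrCA.
by apply: mulr_ge0 => //; rewrite mulrC; exact: mul_conjC_ge0.
Qed.

Lemma mxtrace_psdmx_mul_ge0 n (A B : 'M[C]_n) :
  psdmx A -> psdmx B -> 0 <= \tr (A *m B).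
Proof.
move=> hA hB; set U := spectralmx B; set d := spectral_diag B.
have -> : \tr (A *m B) = \tr (U *m A *m U^t* *m diag_mx d).
  by rewrite {1}(hermitian_spectralE hB.1) !mulmxA mxtrace_mulC !mulmxA.
rewrite mul_mx_diag /mxtrace; apply: sumr_ge0 => k _; rewrite mxE.
exact/mulr_ge0/psdmx_spectral_diag_ge0/hB/psdmx_congr_diag_ge0.
Qed.

Lemma psdmx_1_sub_density n (rho : 'M[C]_n) :
  density_matrix rho -> psdmx (1%:M - rho).
Proof.
move=> [hrho tr1]; set U := spectralmx rho; set d := spectral_diag rho.
have d_ge0 k : 0 <= d 0 k by exact: psdmx_spectral_diag_ge0.
have d_le1 k : d 0 k <= 1.
  rewrite -tr1 (hermitian_spectralE hrho.1) mxtrace_mulC mulmxA.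
  rewrite (unitarymxP (spectral_unitarymx rho)) mul1mx mxtrace_diag.
  by rewrite (bigD1 k) //= lerDl; exact: sumr_ge0.
have -> : 1%:M - rho = U^t* *m diag_mx (const_mx 1 - d) *m U.
  rewrite {1}(hermitian_spectralE hrho.1) raddfB /= diag_const_mx.
  by rewrite mulmxBr mulmxBl mulmx1 spectral_adjmxK.
by apply: psdmx_conj_diag => k; rewrite !mxE subr_ge0.
Qed.

End PositiveSemidefinite.

Section Eigenspans.
Variable C : numClosedFieldType.

Lemma hermitian_eigvec_form n (D : 'M[C]_n) (u v : 'cV[C]_n) (a b : C) :
  D^t* = D -> a^* = a -> D *m u = a *: u -> D *m v = b *: v ->
  b * (u^t* *m v) 0 0 = a * (u^t* *m v) 0 0.
Proof.
move=> hD a_real Du Dv.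
have := congr1 (fun M : 'M[C]_1 => M 0 0) (mulmxA (u^t*) D v).
by rewrite /= -{2}hD -adjmxM Du Dv adjmxZ a_real -scalemxAr -scalemxAl !mxE.
Qed.

(* Eigenvectors with distinct eigenvalues are orthogonal, so the form of [D] on
   a sum of eigenvectors [vs i] with eigenvalues [ls i > 0] is the squared norm
   of [\sum_i sqrt (ls i) vs i]. *)
Lemma pos_eigspan_form_ge0 n (D : 'M[C]_n) (v : 'cV[C]_n) :
  D^t* = D -> in_eigspan (fun l => 0 < l) D v -> 0 <= (v^t* *m D *m v) 0 0.
Proof.
move=> hD [k [vs [ls [eig ->]]]].
pose a i j := ((vs i)^t* *m vs j) 0 0; pose s i := sqrtC (ls i).
have ls_ge0 i : 0 <= ls i by apply: ltW; case: (eig i).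
have s_real i : (s i)^* = s i by apply/geC0_conj; rewrite sqrtC_ge0.
have form_ij i j : ls j * a i j = (s i)^* * s j * a i j.
  rewrite s_real; have [eq_ij|neq] := eqVneq (ls i) (ls j).
    by rewrite /s eq_ij -expr2 sqrtCK.
  have : (ls j - ls i) * a i j = 0.
    rewrite mulrBl (hermitian_eigvec_form hD _ (eig i).2 (eig j).2) ?subrr //.
    exact: geC0_conj.
  move/eqP; rewrite mulf_eq0 subr_eq0 eq_sym (negbTE neq) => /eqP ->.
  by rewrite !mulr0.
have bilinE (x y : 'I_k -> 'cV[C]_n) :
    ((\sum_i x i)^t* *m \sum_j y j) 0 0 = \sum_i \sum_j ((x i)^t* *m y j) 0 0.
  rewrite adjmx_sum mulmx_suml summxE; apply: eq_bigr => i _.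
  by rewrite mulmx_sumr summxE.
have -> : ((\sum_i vs i)^t* *m D *m \sum_i vs i) 0 0 = \sum_i \sum_j ls j * a i j.
  rewrite -mulmxA mulmx_sumr (eq_bigr _ (fun i _ => (eig i).2)) bilinE.
  by apply: eq_bigr => i _; apply: eq_bigr => j _; rewrite -scalemxAr mxE.
under eq_bigr do under eq_bigr do rewrite form_ij.
have <- : ((\sum_i s i *: vs i)^t* *m \sum_j s j *: vs j) 0 0
          = \sum_i \sum_j (s i)^* * s j * a i j.
  rewrite bilinE; apply: eq_bigr => i _; apply: eq_bigr => j _.
  by rewrite adjmxZ -scalemxAl -scalemxAr scalerA mxE.
exact: cVnorm_ge0.
Qed.

Lemma in_eigspan_mulmx (sel : C -> bool) n (D : 'M[C]_n) (v : 'cV[C]_n) :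
  in_eigspan sel D v -> in_eigspan sel D (D *m v).
Proof.
move=> [k [vs [ls [eig ->]]]]; exists k, (fun i => ls i *: vs i), ls; split.
  by move=> i; split; [case: (eig i) | rewrite -scalemxAr (eig i).2].
by rewrite mulmx_sumr; apply: eq_bigr => i _; rewrite (eig i).2.
Qed.

Lemma in_eigspan_neg n (D : 'M[C]_n) (v : 'cV[C]_n) :
  in_eigspan (fun l => l < 0) D v <-> in_eigspan (fun l => 0 < l) (- D) v.
Proof.
split=> [[k [vs [ls [eig ->]]]]|[k [vs [ls [eig ->]]]]];
  exists k, vs, (fun i => - ls i); split => // i; have [sel_i Dv_i] := eig i.
- by rewrite oppr_gt0 mulNmx Dv_i scaleNr.
- by rewrite oppr_lt0 scaleNr -Dv_i mulNmx opprK.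
Qed.

Lemma orth_projector_onto_ext n (P : 'M[C]_n) (S S' : 'cV[C]_n -> Prop) :
  (forall v, S v <-> S' v) -> orth_projector_onto P S -> orth_projector_onto P S'.
Proof.
move=> SS' [PP [hP rangeP]]; do 2!split => //.
by move=> v; split=> [/rangeP/SS'|/SS'/rangeP].
Qed.

(* [D] maps the range of [P] into itself, so [P D P = D P]; taking adjoints
   gives [P D P = P D]. *)
Lemma orth_projector_commute n (D P : 'M[C]_n) (S : 'cV[C]_n -> Prop) :
  D^t* = D -> orth_projector_onto P S ->
  (forall v, S v -> S (D *m v)) -> P *m D = D *m P /\ P *m D *m P = D *m P.
Proof.
move=> hD [PP [hP rangeP]] DS.
have PDP : P *m D *m P = D *m P.
  apply: mulmx_cV_inj => v; rewrite -!mulmxA; apply/rangeP/DS/rangeP.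
  by rewrite mulmxA PP.
split=> //; have : (P *m D *m P)^t* = (D *m P)^t* by rewrite PDP.
by rewrite !adjmxM hP hD mulmxA PDP.
Qed.

Lemma psdmx_mul_pos_projector n (D P : 'M[C]_n) :
  D^t* = D -> orth_projector_onto P (in_eigspan (fun l => 0 < l) D) ->
  P *m D = D *m P /\ psdmx (D *m P).
Proof.
move=> hD hP; have [PD PDP] := orth_projector_commute hD hP (@in_eigspan_mulmx _ _ D).
have [PP [adjP rangeP]] := hP.
split=> //; split; first by rewrite /Defs.hermitianmx adjmxM adjP hD.
move=> v; rewrite -PDP.
have -> : v^t* *m (P *m D *m P) *m v = (P *m v)^t* *m D *m (P *m v).
  by rewrite adjmxM adjP !mulmxA.
by apply: pos_eigspan_form_ge0 => //; apply/rangeP; rewrite mulmxA PP.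
Qed.

End Eigenspans.

Theorem lemma1 (C : numClosedFieldType) (N : nat) (rho1 rho2 Pp Pm : 'M[C]_N) :
  density_matrix rho1 -> density_matrix rho2 ->
  orth_projector_onto Pp (in_eigspan (fun l => 0 < l) (rho1 - rho2)) ->
  orth_projector_onto Pm (in_eigspan (fun l => l < 0) (rho1 - rho2)) ->
  [/\ \tr (Pp *m (1%:M - rho1) *m rho1) >= \tr (Pp *m (1%:M - rho1) *m rho2),
      \tr (Pm *m rho1 *m (1%:M - rho1)) >= \tr (Pm *m rho1 *m (1%:M - rho2)),
      \tr (Pp *m (1%:M - rho2) *m rho2) >= \tr (Pp *m (1%:M - rho1) *m rho2)
    & \tr (Pm *m rho2 *m (1%:M - rho2)) >= \tr (Pm *m rho1 *m (1%:M - rho2))].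
Proof.
move=> h1 h2 hPp hPm; set D := rho1 - rho2.
have hD : D^t* = D by rewrite adjmxB h1.1.1 h2.1.1.
have hND : (- D)^t* = - D by rewrite !raddfN /= hD.
have [PpD psdDPp] := psdmx_mul_pos_projector hD hPp.
have [PmD psdNDPm] := psdmx_mul_pos_projector hND
  (orth_projector_onto_ext (@in_eigspan_neg _ _ D) hPm).
rewrite opprB in PmD psdNDPm.
have subKB (a b c : 'M[C]_N) : (a - b) - (a - c) = c - b.
  by rewrite opprB addrC addrA subrK.
have [psd1 psd2] := (h1.1, h2.1).
have [psdC1 psdC2] := (psdmx_1_sub_density h1, psdmx_1_sub_density h2).
split; rewrite -subr_ge0 -raddfB /=.
- rewrite -mulmxBr mxtrace_mulC mulmxA; exact: mxtrace_psdmx_mul_ge0.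
- rewrite -mulmxBr subKB mxtrace_mulC mulmxA; exact: mxtrace_psdmx_mul_ge0.
- rewrite -mulmxBl -mulmxBr subKB PpD; exact: mxtrace_psdmx_mul_ge0.
- rewrite -mulmxBl -mulmxBr PmD; exact: mxtrace_psdmx_mul_ge0.
Qed.
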